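(* Let $\varepsilon>0$ be rational and let $f:\mathbb{N}\to\mathbb{N}$ satisfy $f(n)\ge n\varepsilon$ for all $n\ge0$. Then for all $A\subseteq\mathbb{N}$ we have $\bar d(f[A])\le\frac{1}{\varepsilon}\bar d(A)$. In particular $f\in\mathscr{C}_{I_{\bar d=0}}$.
   Context: $\mathbb{N}=\{0,1,2,\dots\}$. For $A\subseteq\mathbb{N}$, $\bar d(A)=\limsup_{n\to\infty}\frac{|A\cap[0,n)|}{n}$. $\mathscr{C}_{I_{\bar d=0}}$ is the set of all finitary functions $f:\mathbb{N}^k\to\mathbb{N}$ ($k\ge1$) such that $\bar d(f[A^k])=0$ whenever $\bar d(A)=0$. *)

From HB Require Import structures.
From mathcomp Require Import all_boot all_order all_algebra.
From mathcomp Require Import all_classical all_reals all_analysis.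
Set Implicit Arguments. Unset Strict Implicit. Unset Printing Implicit Defensive.
Import Order.TTheory GRing.Theory Num.Theory.
Local Open Scope classical_set_scope.
Local Open Scope ring_scope.

Definition count_below (R : realType) (A : set nat) (n : nat) : R :=
  \sum_(i < n) (\1_A i : R).

Definition upper_density (R : realType) (A : set nat) : \bar R :=
  limn_esup (fun n : nat => ((count_below R A n) / n%:R)%:E).

Definition set_pow (k : nat) (A : set nat) : set ('I_k -> nat) :=
  [set x | forall i, A (x i)].
Arguments set_pow : clear implicits.

Definition in_C_dbar0 (R : realType) (k : nat) (g : ('I_k -> nat) -> nat) : Prop :=
  (0 < k)%N /\
  forall A : set nat, upper_density R A = 0%E ->
    upper_density R (g @` set_pow k A) = 0%E.
Arguments in_C_dbar0 : clear implicits.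

From HB Require Import structures.
From mathcomp Require Import all_boot all_order all_algebra.
From mathcomp Require Import all_classical all_reals all_analysis.
From mathcomp Require Import ring lra.
Import Order.TTheory GRing.Theory Num.Theory.
Local Open Scope classical_set_scope.
Local Open Scope ring_scope.

(* Since f a >= eps a, every preimage under f of a point below n lies below
   M = floor(n / eps) + 1, so |f[A] ∩ [0,n)| <= |A ∩ [0,M)|.  Dividing by
   n ~ eps M gives d_n(f[A]) <= d_M(A) / eps + 1/n, and M -> oo with n, so
   passing to the limsup yields dbar(f[A]) <= dbar(A) / eps. *)

Section count_below.
Variable R : realType.
Implicit Types (A : set nat) (n : nat).

Lemma count_below_ge0 A n : 0 <= count_below R A n.
Proof. by apply: sumr_ge0 => i _; rewrite indicE ler0n. Qed.

Lemma count_below_le A n : count_below R A n <= n%:R.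
Proof.
rewrite /count_below -[leRHS]mulr1n -[in leRHS](card_ord n) -sumr_const.
by apply: ler_sum => i _; rewrite indicE lern1 leq_b1.
Qed.

Lemma count_below_image A (f : nat -> nat) (N M : nat) :
  (forall a, (f a < N)%N -> (a < M)%N) ->
  count_below R (f @` A) N <= count_below R A M.
Proof.
(* Double counting: each point of f[A] below N is hit by a point of A below M,
   and each point of A hits at most one point. *)
move=> fNM; pose hit (a : 'I_M) (i : 'I_N) : R := \1_A (val a) * (f a == i)%:R.
have hit_ge0 a i : 0 <= hit a i by rewrite mulr_ge0 ?indicE ?ler0n.
have cover (i : 'I_N) : \1_(f @` A) (val i) <= \sum_a hit a i.
  rewrite indicE; have [[a Aa fai]|nfA] := pselect ((f @` A) i); last first.
    by rewrite memNset // sumr_ge0.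
  have aM : (a < M)%N by apply: fNM; rewrite fai.
  rewrite mem_set; last by exists a.
  rewrite (bigD1 (Ordinal aM)) //= /hit indicE mem_set //= fai eqxx mulr1.
  by rewrite lerDl sumr_ge0.
have once (a : 'I_M) : \sum_i hit a i <= \1_A (val a).
  rewrite -mulr_sumr ler_piMr ?indicE ?ler0n //.
  have [faN|Nfa] := ltnP (f a) N; last first.
    rewrite big1 // => i _; case: eqP => // fai.
    by move: (ltn_ord i); rewrite -fai ltnNge Nfa.
  rewrite (bigD1 (Ordinal faN)) //= eqxx big1 ?addr0 // => i /eqP ni.
  by case: eqP => // fai; case: ni; exact: val_inj.
rewrite /count_below (le_trans (ler_sum _ (fun i _ => cover i))) //.
by rewrite exchange_big ler_sum.
Qed.


Lemma upper_density_ge0 A : (0 <= upper_density R A)%E.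
Proof.
apply: limf_esup_ge0 => [[N _ /(_ N (leqnn N))] //|n].
by rewrite lee_fin divr_ge0 ?count_below_ge0.
Qed.

End count_below.

Lemma ler_div_rescale (R : realFieldType) (x M N d : R) :
  0 < N -> 0 < M -> 0 < d -> 0 <= x <= M -> M * d <= N + d ->
  x / N <= d^-1 * (x / M) + N^-1.
Proof.
move=> N0 M0 d0 /andP[x0 xM] MdN; rewrite -subr_ge0.
have -> : d^-1 * (x / M) + N^-1 - x / N = (x * N + M * d - x * M * d) / (N * M * d).
  by field; rewrite !gt_eqF.
apply: divr_ge0; last by rewrite !mulr_ge0 // ltW.
have := ler_wpM2l x0 MdN; have := ler_wpM2r (ltW d0) xM; nra.
Qed.

Section limn_esup_comp.
Context {R : realType}.
Local Open Scope ereal_scope.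

Lemma limn_esup_le_eventually (v : (\bar R)^nat) (x : \bar R) :
  (\forall n \near \oo, v n <= x) -> limn_esup v <= x.
Proof.
move=> [N _ vx]; apply: le_trans (ereal_inf_lbound _) _.
  by exists [set n | (N <= n)%N] => //; exists N.
by apply: ge_ereal_sup => _ [n Nn <-]; exact: vx.
Qed.

Lemma limn_esup_le_scale_comp (u v : (\bar R)^nat) (c : R) (m : nat -> nat) :
  (0 <= c)%R -> m @ \oo --> \oo ->
  (forall d : R, (0 < d)%R -> \forall n \near \oo, v n <= c%:E * u (m n) + d%:E) ->
  limn_esup v <= c%:E * limn_esup u.
Proof.
move=> c0 m_oo vu; rewrite (limn_esup_lim u) -limeMl //; last exact: is_cvg_esups.
apply: lime_ge; first by apply: is_cvgeZl => //; exact: is_cvg_esups.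
apply: nearW => K; apply/lee_addgt0Pr => d d0.
apply: limn_esup_le_eventually; near=> n.
apply: le_trans (_ : c%:E * u (m n) + d%:E <= _); first by near: n; exact: vu.
rewrite leeD2r // lee_wpmul2l ?lee_fin //; apply: ereal_sup_ubound => /=.
by exists (m n) => //; near: n; exact: m_oo (nbhs_infty_ge K).
Unshelve. all: by end_near. Qed.

End limn_esup_comp.

Section linear_growth.
Variables (R : realType) (e : R) (f : nat -> nat).
Hypothesis e_gt0 : 0 < e.
Hypothesis f_ge : forall n, n%:R * e <= (f n)%:R.

Definition scaled_index (n : nat) : nat := (Num.truncn (n%:R / e)).+1.

Lemma scaled_index_gt n : n%:R / e < (scaled_index n)%:R.
Proof. exact: truncnS_gt. Qed.

Lemma scaled_index_le n : (scaled_index n)%:R * e <= n%:R + e.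
Proof.
rewrite /scaled_index -addn1 natrD mulrDl mul1r lerD2r -ler_pdivlMr //.
by rewrite truncn_le divr_ge0 // ltW.
Qed.

Lemma scaled_index_cvg : scaled_index @ \oo --> \oo.
Proof.
move=> P [K _ KP]; apply: filterS (fun n => @KP (scaled_index n)) _.
near=> n; suff : (K <= scaled_index n)%N by [].
rewrite -(ler_nat R) ltW // (le_lt_trans _ (scaled_index_gt n)) // ler_pdivlMr //.
by near: n; apply: nbhs_infty_ger.
Unshelve. all: by end_near. Qed.

Lemma scaled_index_preimage n a : (f a < n)%N -> (a < scaled_index n)%N.
Proof.
move=> fan; rewrite -(ltr_nat R) (le_lt_trans _ (scaled_index_gt n)) //.
by rewrite ler_pdivlMr // (le_trans (f_ge a)) // ler_nat ltnW.
Qed.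

Lemma count_below_image_ratio (A : set nat) n : (0 < n)%N ->
  count_below R (f @` A) n / n%:R <=
  e^-1 * (count_below R A (scaled_index n) / (scaled_index n)%:R) + n%:R^-1.
Proof.
move=> n_gt0; apply: le_trans (_ : count_below R A (scaled_index n) / n%:R <= _).
  rewrite ler_pM2r ?invr_gt0 ?ltr0n // count_below_image //.
  exact: scaled_index_preimage.
by apply: ler_div_rescale;
  rewrite ?ltr0n ?count_below_ge0 ?count_below_le ?scaled_index_le.
Qed.

Lemma upper_density_image_le (A : set nat) :
  (upper_density R (f @` A) <= (e^-1)%:E * upper_density R A)%E.
Proof.
apply: limn_esup_le_scale_comp scaled_index_cvg _ => [|d d_gt0].
  by rewrite invr_ge0 ltW.
near=> n; rewrite -EFinM -EFinD lee_fin.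
apply: le_trans (count_below_image_ratio A n _) _; last first.
  rewrite lerD2l ltW // invf_plt ?posrE ?ltr0n //.
    by near: n; exact: nbhs_infty_gtr.
  by near: n; exact: nbhs_infty_gt.
by near: n; exact: nbhs_infty_gt.
Unshelve. all: by end_near. Qed.

End linear_growth.

Lemma image_set_pow1 (g : nat -> nat) (A : set nat) :
  (fun x : 'I_1 -> nat => g (x ord0)) @` set_pow 1 A = g @` A.
Proof.
apply/seteqP; split => _ [x Ax <-]; first by exists (x ord0).
by exists (fun=> x).
Qed.

Theorem mainTheorem9 (R : realType) (eps : rat) (f : nat -> nat) :
  0 < eps ->
  (forall n : nat, n%:R * ratr eps <= (f n)%:R :> R) ->
  (forall A : set nat,
     (upper_density R (f @` A) <= ((ratr eps)^-1)%:E * upper_density R A)%E)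
  /\ in_C_dbar0 R 1%N (fun x : 'I_1 -> nat => f (x ord0)).
Proof.
move=> eps_gt0 f_ge; have e_gt0 : 0 < ratr eps :> R by rewrite ltr0q.
have density_le := @upper_density_image_le R _ f e_gt0 f_ge.
split=> //; split=> // A A0; rewrite image_set_pow1.
apply/eqP; rewrite eq_le upper_density_ge0 andbT.
by rewrite (le_trans (density_le A)) // A0 mule0.
Qed.
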